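(* Let $p\ge 2$ be an integer, set $q=\lfloor p/2\rfloor$, let $G$ be a graph and $v$ a vertex of $G$ of degree $d(v)$. Then (i) $\mathrm{id}^{\leq p}(G)\le \mathrm{id}^{\leq p}(G-v)+\left\lceil\frac{d(v)}{p-1}\right\rceil$; and (ii) if $d(v)\ge q$, then $\mathrm{id}^{\leq p}(G)\le \mathrm{id}^{\leq p}(G-v)+\left\lfloor \frac{d(v)}{q}\right\rfloor$.
   Context: All graphs are finite and simple. For an oriented graph $D$ and $X\subseteq V(D)$, the inversion of $X$ reverses every arc with both endvertices in $X$; a $(\leq p)$-inversion is the inversion of a set of at most $p$ vertices. $\mathrm{id}^{\leq p}(G)$ is the maximum, over all ordered pairs $(\vec G_1,\vec G_2)$ of orientations of $G$, of the minimum number of $(\leq p)$-inversions transforming $\vec G_1$ into $\vec G_2$. *)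

From mathcomp Require Import all_boot.
Set Implicit Arguments. Unset Strict Implicit. Unset Printing Implicit Defensive.

(* A finite simple graph: vertex type T : finType, adjacency e : rel T,
   assumed symmetric and irreflexive (hypotheses of the theorem).
   We consider induced subgraphs G[V] for V : {set T}; G - v is G[[set: T] :\ v]. *)

Definition is_orientation (T : finType) (e : rel T) (V : {set T}) (o : rel T) : Prop :=
  forall x y,
    (o x y -> [&& x \in V, y \in V & e x y]) /\
    (x \in V -> y \in V -> e x y -> o x y = ~~ o y x).

Definition invert (T : finType) (X : {set T}) (o : rel T) : rel T :=
  fun x y => if (x \in X) && (y \in X) then o y x else o x y.

Definition apply_inversions (T : finType) (s : seq {set T}) (o : rel T) : rel T :=
  foldl (fun o' X => invert X o') o s.

Definition inv_reach (T : finType) (p : nat) (V : {set T}) (o1 o2 : rel T) (k : nat) : Prop :=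
  exists s : seq {set T},
    size s <= k /\
    all (fun X : {set T} => (X \subset V) && (#|X| <= p)) s /\
    (forall x y, apply_inversions s o1 x y = o2 x y).

(* id_le e p V k  <->  id^{<= p}(G[V]) <= k, i.e. for every ordered pair of
   orientations of G[V], the minimum number of (<= p)-inversions needed to
   transform the first into the second is at most k. *)
Definition id_le (T : finType) (e : rel T) (p : nat) (V : {set T}) (k : nat) : Prop :=
  forall o1 o2 : rel T, is_orientation e V o1 -> is_orientation e V o2 ->
    inv_reach p V o1 o2 k.

Definition degree (T : finType) (e : rel T) (v : T) : nat := #|[set u | e v u]|.

From mathcomp Require Import all_boot zify.
Set Implicit Arguments. Unset Strict Implicit.

(* To turn o1 into o2, split the neighbours u of v on which o1 and o2 disagree
   into n blocks Y of size at most p-1, where d(v) <= n (p-1), and invert each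
   v |: Y.  Afterwards every arc at v agrees with o2, and the remaining arcs of
   G - v are repaired by at most id(G - v) inversions avoiding v, which leave
   the arcs at v untouched.  Both bounds are instances: n = ceil(d(v)/(p-1)),
   and n = floor(d(v)/q) once d(v) >= q, since then n (p-1) >= n (2q-1) >= d(v). *)

Lemma apply_inversionsE (T : finType) (s : seq {set T}) (o : rel T) x y :
  apply_inversions s o x y =
  if odd (count (fun X : {set T} => (x \in X) && (y \in X)) s) then o y x else o x y.
Proof.
elim: s o => [|X s IH] o //=.
rewrite /apply_inversions /= -/(apply_inversions s (invert X o)) IH /invert.
by case: (x \in X); case: (y \in X); rewrite /= ?add1n ?add0n /=; case: (odd _).
Qed.

Lemma count_inversions_sym (T : finType) (s : seq {set T}) x y :
  count (fun X : {set T} => (y \in X) && (x \in X)) s =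
  count (fun X : {set T} => (x \in X) && (y \in X)) s.
Proof. by apply: eq_count => X; rewrite andbC. Qed.

Lemma apply_inversions_outside (T : finType) (V : {set T}) (s : seq {set T}) o x y :
  all (fun X : {set T} => X \subset V) s -> ~~ ((x \in V) && (y \in V)) ->
  apply_inversions s o x y = o x y.
Proof.
move=> /allP sV xyV; rewrite apply_inversionsE.
suff -> : count (fun X : {set T} => (x \in X) && (y \in X)) s = 0 by [].
apply/eqP; rewrite -leqn0 leqNgt -has_count; apply/hasP => -[X /sV /subsetP sXV].
by case/andP => /sXV xV /sXV yV; rewrite xV yV in xyV.
Qed.

Definition restr (T : finType) (V : {set T}) (o : rel T) : rel T :=
  fun x y => [&& x \in V, y \in V & o x y].

Lemma apply_inversions_restr (T : finType) (V : {set T}) (s : seq {set T}) o x y :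
  x \in V -> y \in V -> apply_inversions s (restr V o) x y = apply_inversions s o x y.
Proof. by move=> xV yV; rewrite !apply_inversionsE /restr xV yV. Qed.

Lemma exists_subset_card (T : finType) (D : {set T}) k :
  k <= #|D| -> exists2 S : {set T}, S \subset D & #|S| = k.
Proof.
elim: k => [|k IH] hk; first by exists set0; rewrite ?sub0set ?cards0.
have [S sSD cS] := IH (ltnW hk).
have : S \proper D by rewrite properEcard sSD cS.
case/properP => _ [x xD xS]; exists (x |: S); first by rewrite subUset sub1set xD.
by rewrite cardsU1 xS cS.
Qed.

Lemma exists_small_cover (T : finType) (m n : nat) (D : {set T}) :
  #|D| <= n * m -> exists Ss : seq {set T},
    [/\ size Ss <= n, all (fun S : {set T} => #|S| <= m) Ss &
        forall u, count (fun S : {set T} => u \in S) Ss = (u \in D)].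
Proof.
elim: n D => [|n IH] D hD.
  exists [::]; split=> // u; move: hD; rewrite mul0n leqn0 cards_eq0 => /eqP ->.
  by rewrite inE.
have [S sSD cS] := exists_subset_card (geq_minr m #|D|).
have [|Ss [sizeSs smallSs countSs]] := IH (D :\: S).
  by rewrite cardsD (setIidPr sSD) cS; move: hD; rewrite mulSn; lia.
exists (S :: Ss); split=> //=; first by rewrite cS geq_minl.
move=> u; rewrite countSs in_setD.
by case uS: (u \in S) => //=; rewrite (subsetP sSD).
Qed.

Lemma leq_divup_mul d m : 0 < m -> d <= (d + m.-1) %/ m * m.
Proof.
move=> m_gt0; have := ltn_ceil (d + m.-1) m_gt0; rewrite mulSn.
by generalize ((d + m.-1) %/ m * m); lia.
Qed.

Lemma leq_div_half_mul_pred d p : 2 <= p -> p./2 <= d -> d <= d %/ p./2 * p.-1.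
Proof.
move=> p_ge2 q_le_d; set q := p./2; set a := d %/ q.
have q_gt0 : 0 < q by rewrite half_gt0.
have a_gt0 : 0 < a by rewrite divn_gt0.
have q2_le_p : q.*2 <= p by rewrite -[leqRHS]odd_double_half leq_addl.
(* a (p-1) >= a (2q-1) = a q + a (q-1) >= a q + (q-1) > a q + d %% q *)
have le_pred : a * (q + q.-1) <= a * p.-1.
  by apply: leq_mul => //; move: q2_le_p; rewrite -addnn; lia.
have le_rem : q.-1 <= a * q.-1 by rewrite leq_pmull.
rewrite {1}(divn_eq d q) -/a; have := ltn_pmod d q_gt0.
by move: le_pred le_rem; rewrite mulnDr; generalize (a * q) (a * q.-1) (d %% q); lia.
Qed.

Section Orientations.

Variables (T : finType) (e : rel T).

Lemma orientation_edge (V : {set T}) o x y : is_orientation e V o -> o x y -> e x y.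
Proof. by move=> ho /(proj1 (ho x y)) /and3P[]. Qed.

Lemma orientation_flip (V : {set T}) o x y : is_orientation e V o ->
  y \in V -> x \in V -> e y x -> o y x = ~~ o x y.
Proof. by move=> ho; apply: (proj2 (ho y x)). Qed.

Lemma orientation_edge_neq (V W : {set T}) o1 o2 x y :
  is_orientation e V o1 -> is_orientation e W o2 -> o1 x y != o2 x y -> e x y.
Proof.
move=> ho1 ho2; case: (boolP (o1 x y)) => [/(orientation_edge ho1) //|_].
by rewrite eq_sym eqbF_neg negbK => /(orientation_edge ho2).
Qed.

Lemma orientation_loop (V : {set T}) o x : is_orientation e V o -> o x x = false.
Proof.
move=> ho; apply/negP => oxx; have /and3P[xV _ exx] := proj1 (ho x x) oxx.
by have := orientation_flip ho xV xV exx; rewrite oxx.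
Qed.

Lemma orientation_agree_sym (V : {set T}) o1 o2 x y :
  is_orientation e V o1 -> is_orientation e V o2 ->
  o1 x y = o2 x y -> o1 y x = o2 y x.
Proof.
move=> ho1 ho2 oxy; have [/and3P[yV xV eyx]|no_arc] := boolP [&& y \in V, x \in V & e y x].
  by rewrite (orientation_flip ho1 yV xV eyx) (orientation_flip ho2 yV xV eyx) oxy.
by apply/idP/idP => [/(proj1 (ho1 y x))|/(proj1 (ho2 y x))] arc; rewrite arc in no_arc.
Qed.

Lemma is_orientation_restr (V W : {set T}) o :
  V \subset W -> is_orientation e W o -> is_orientation e V (restr V o).
Proof.
move=> /subsetP sVW ho x y; split; first by case/and3P=> -> -> /(orientation_edge ho) ->.
by move=> xV yV exy; rewrite /restr xV yV (orientation_flip ho) ?sVW.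
Qed.

Hypothesis e_sym : symmetric e.

Lemma is_orientation_apply_inversions (V : {set T}) s o :
  is_orientation e V o -> is_orientation e V (apply_inversions s o).
Proof.
move=> ho x y; rewrite !apply_inversionsE count_inversions_sym.
case: (odd _); last exact: ho.
split; first by move=> /(proj1 (ho y x)) /and3P[-> ->]; rewrite e_sym.
by move=> xV yV exy; rewrite (orientation_flip ho) ?negbK // e_sym.
Qed.

Lemma apply_inversions_star o1 o2 v (Ss : seq {set T}) :
  is_orientation e [set: T] o1 -> is_orientation e [set: T] o2 ->
  (forall u, count (fun Y : {set T} => u \in Y) Ss = (o1 v u != o2 v u)) ->
  forall u, apply_inversions [seq v |: Y | Y <- Ss] o1 v u = o2 v u.
Proof.
move=> ho1 ho2 countSs u; rewrite apply_inversionsE.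
have [->|uv] := eqVneq u v.
  by rewrite if_same (orientation_loop _ ho1) (orientation_loop _ ho2).
rewrite count_map (eq_count (a2 := fun Y : {set T} => u \in Y)); last first.
  by move=> Y; rewrite /= !inE eqxx (negbTE uv).
rewrite countSs; case: eqP => [<-|/eqP o12] //=.
have euv : e u v by rewrite e_sym (orientation_edge_neq ho1 ho2 o12).
by rewrite (orientation_flip ho1 _ _ euv) ?inE //; move: o12; case: (o1 v u); case: (o2 v u).
Qed.

Lemma id_le_add_vertex p v k n : 0 < p -> degree e v <= n * p.-1 ->
  id_le e p ([set: T] :\ v) k -> id_le e p [set: T] (k + n).
Proof.
move=> p_gt0 deg_le hid o1 o2 ho1 ho2.
set D := [set u | o1 v u != o2 v u].
have cardD : #|D| <= n * p.-1.
  apply: leq_trans deg_le; apply: subset_leq_card; apply/subsetP => u.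
  by rewrite !inE; apply: orientation_edge_neq ho1 ho2.
have [Ss [sizeSs smallSs countSs]] := exists_small_cover cardD.
set star := [seq v |: Y | Y <- Ss]; set o := apply_inversions star o1.
have ho : is_orientation e [set: T] o := is_orientation_apply_inversions _ ho1.
have o_at_v u : o v u = o2 v u.
  by apply: apply_inversions_star => // w; rewrite countSs inE.
set V' := [set: T] :\ v; have sV' : V' \subset [set: T] := subsetT _.
have [s [sizes [smalls reach]]] :=
  hid _ _ (is_orientation_restr sV' ho) (is_orientation_restr sV' ho2).
have sV's : all (fun X : {set T} => X \subset V') s.
  by apply/allP => X /(allP smalls) /andP[].
exists (star ++ s); split; first by rewrite size_cat size_map addnC leq_add.
split.
  rewrite all_cat; apply/andP; split; last first.
    by apply/allP => X /(allP smalls) /andP[_ ->]; rewrite subsetT.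
  apply/allP => _ /mapP[Y /(allP smallSs) cardY ->]; rewrite subsetT cardsU1 /=.
  by move: cardY; case: (v \notin Y) => /=; lia.
move=> x y; rewrite /apply_inversions foldl_cat -!/(apply_inversions _ _) -/o.
have [/andP[xV yV]|out] := boolP ((x \in V') && (y \in V')).
  by rewrite -(apply_inversions_restr _ _ xV yV) reach /restr xV yV.
rewrite (apply_inversions_outside _ sV's out).
move: out; rewrite !inE !andbT negb_and !negbK => /orP[/eqP->|/eqP->].
  exact: o_at_v.
exact: orientation_agree_sym ho ho2 (o_at_v x).
Qed.

End Orientations.

Theorem mainTheorem13 (T : finType) (e : rel T)
    (e_sym : symmetric e) (e_irr : irreflexive e)
    (p : nat) (hp : 2 <= p) (v : T) :
  (forall k : nat, id_le e p ([set: T] :\ v) k ->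
     id_le e p [set: T] (k + (degree e v + (p - 2)) %/ (p - 1)))
  /\
  (p./2 <= degree e v ->
   forall k : nat, id_le e p ([set: T] :\ v) k ->
     id_le e p [set: T] (k + degree e v %/ p./2)).
Proof.
have p_gt0 : 0 < p by apply: ltnW.
split=> [|deg_ge] k; apply: id_le_add_vertex => //.
- have -> : p.-1 = p - 1 by rewrite subn1.
  have -> : p - 2 = (p - 1).-1 by lia.
  by apply: leq_divup_mul; lia.
- exact: leq_div_half_mul_pred.
Qed.
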